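(* Assume (A1) and (A2) at time $k$, let $\phi$ satisfy (A3) at time $k$, and suppose that for a constant $\widetilde M_{k|k-1}$ independent of $N$, $\mathbb{E}|\langle\widetilde\pi^N_{k|k-1},\beta_k|\phi|^4\rangle-\langle\pi_{k|k-1},\beta_k|\phi|^4\rangle|\le\widetilde M_{k|k-1}\|\beta_k\|_\infty\|\phi\|^4_{k-1,4}$. Then $$\mathbb{E}\,\langle\widetilde\pi^N_{k|k},|\phi|^4\rangle\le\widetilde M_{k|k}\|\phi\|^4_{k,4},\qquad \widetilde M_{k|k}=3\max\Big\{\frac{2\|\beta_k|\phi|^4\|_\infty\|\beta_k\|_\infty}{\gamma_k\langle\pi_{k|k-1},\beta_k\rangle},\frac{\widetilde M_{k|k-1}\|\beta_k\|_\infty}{\langle\pi_{k|k-1},\beta_k\rangle},1\Big\}.$$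
   Context: Notation: for a measure $\nu$ and function $\phi$, $\langle\nu,\phi\rangle=\int\phi\,d\nu$; $\|f\|_\infty$ is the supremum norm. Fixed data: integer $k\ge1$; deterministic vectors $\mathbf{x}_0,\dots,\mathbf{x}_k\in\mathbb{R}^{n_x}$ (defender's true states) and $\mathbf{a}_1,\dots,\mathbf{a}_k\in\mathbb{R}^{n_a}$ (defender's observations); a conditional density $\rho(\mathbf{y}|\mathbf{x})$ in $\mathbf{y}\in\mathbb{R}^{n_y}$; a conditional density $\beta(\mathbf{a}|\hat{\mathbf{x}})$ in $\mathbf{a}\in\mathbb{R}^{n_a}$, $\hat{\mathbf{x}}\in\mathbb{R}^{n_x}$; measurable maps $T_s:\mathbb{R}^{n_x}\times\mathbb{R}^{n_y}\to\mathbb{R}^{n_x}$, $s=1,\dots,k$ (the attacker's forward-filter update $\hat{\mathbf{x}}_s=T_s(\hat{\mathbf{x}}_{s-1},\mathbf{y}_s)$). Write $\beta_s(\hat{\mathbf{x}},\mathbf{y})=\beta(\mathbf{a}_s|\hat{\mathbf{x}})$ and, for a function $\psi$ of $(\hat{\mathbf{x}},\mathbf{y})$, $(\delta_T\rho\psi)_s(\hat{\mathbf{x}}',\mathbf{y}')=\int\psi(T_s(\hat{\mathbf{x}}',\mathbf{y}),\mathbf{y})\rho(\mathbf{y}|\mathbf{x}_s)\,d\mathbf{y}$ (abbreviated $\delta_T\rho\psi$). Optimal inverse filter: probability measures on $\mathbb{R}^{n_x}\times\mathbb{R}^{n_y}$ defined from $\pi_{0|0}=\pi_0$ by $\langle\pi_{s|s-1},\psi\rangle=\langle\pi_{s-1|s-1},\delta_T\rho\psi\rangle$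 and $\langle\pi_{s|s},\psi\rangle=\langle\pi_{s|s-1},\beta_s\psi\rangle/\langle\pi_{s|s-1},\beta_s\rangle$. I-PF with $N$ particles and thresholds $\gamma_s>0$: draw $\hat{\mathbf{x}}^i_0$ i.i.d. from a given distribution $\widetilde\pi^x_0$ and, independently, $\mathbf{y}^i_0$ i.i.d. from $\rho(\cdot|\mathbf{x}_0)$, $i=1,\dots,N$; $\pi_0$ is the (product) law of $(\hat{\mathbf{x}}^i_0,\mathbf{y}^i_0)$ and $\pi^N_{0|0}=\frac1N\sum_i\delta_{(\hat{\mathbf{x}}^i_0,\mathbf{y}^i_0)}$. For $s\ge1$, given particles $(\hat{\mathbf{x}}^i_{s-1},\mathbf{y}^i_{s-1})$: (1) draw conditionally i.i.d. $\bar{\mathbf{y}}^i_s\sim\rho(\cdot|\mathbf{x}_s)$ and set $\bar{\hat{\mathbf{x}}}^i_s=T_s(\hat{\mathbf{x}}^i_{s-1},\bar{\mathbf{y}}^i_s)$; (2) if $\frac1N\sum_i\beta(\mathbf{a}_s|\bar{\hat{\mathbf{x}}}^i_s)\ge\gamma_s$, accept and set $(\tilde{\hat{\mathbf{x}}}^i_s,\tilde{\mathbf{y}}^i_s)=(\bar{\hat{\mathbf{x}}}^i_s,\bar{\mathbf{y}}^i_s)$; otherwise redo (1) independently; (3) set $\widetilde\pi^N_{s|s-1}=\frac1N\sum_i\delta_{(\tilde{\hat{\mathbf{x}}}^i_s,\tilde{\mathbf{y}}^i_s)}$, weights $\omega^i_s=\beta(\mathbf{a}_s|\tilde{\hat{\mathbf{x}}}^i_s)/\sum_j\beta(\mathbf{a}_s|\tilde{\hat{\mathbf{x}}}^j_s)$,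 $\widetilde\pi^N_{s|s}=\sum_i\omega^i_s\delta_{(\tilde{\hat{\mathbf{x}}}^i_s,\tilde{\mathbf{y}}^i_s)}$; (4) draw $N$ conditionally i.i.d. $(\hat{\mathbf{x}}^i_s,\mathbf{y}^i_s)\sim\widetilde\pi^N_{s|s}$ and set $\pi^N_{s|s}=\frac1N\sum_i\delta_{(\hat{\mathbf{x}}^i_s,\mathbf{y}^i_s)}$. Expectations $\mathbb{E}$ are over the particle randomness. Norm: $\|\phi\|_{s,4}=\max\{1,\max_{0\le r\le s}\langle\pi_{r|r},|\phi|^4\rangle^{1/4}\}$. Assumptions: (A1) for $s=1,\dots,k$, $\langle\pi_{s|s-1},\beta_s\rangle>0$ and $0<\gamma_s<\langle\pi_{s|s-1},\beta_s\rangle$. (A2) $\beta(\mathbf{a}_s|\cdot)$ and $\rho(\cdot|\mathbf{x}_s)$ are bounded for $s=1,\dots,k$. (A3) for $s=1,\dots,k$, $\sup_{(\hat{\mathbf{x}},\mathbf{y})}|\phi(\hat{\mathbf{x}},\mathbf{y})|^4\beta(\mathbf{a}_s|\hat{\mathbf{x}})<\infty$. By construction (step (2)), $\langle\widetilde\pi^N_{k|k-1},\beta_k\rangle\ge\gamma_k$. *)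

From HB Require Import structures.
From mathcomp Require Import all_boot all_order all_algebra.
From mathcomp Require Import all_classical all_reals all_analysis.
Set Implicit Arguments. Unset Strict Implicit. Unset Printing Implicit Defensive.
Import Order.TTheory GRing.Theory Num.Theory.
Local Open Scope classical_set_scope.
Local Open Scope ring_scope.

(* Euclidean space R^n, as n-tuples of reals with the product (= Borel) sigma-algebra. *)
Notation Rn R n := (n.-tuple (R : realType)).

(* Lebesgue integral over R^n of an extended-real function, computed as the
   iterated one-dimensional Lebesgue integral (equal to the integral against
   the n-dimensional Lebesgue measure for nonnegative measurable functions,
   by Tonelli). *)
Fixpoint lebint {R : realType} (n : nat) : (Rn R n -> \bar R) -> \bar R :=
  match n with
  | 0 => fun f => f [tuple]
  | n'.+1 => fun f =>
      (\int[@lebesgue_measure R]_(y in [set: R]) lebint (fun t => f (cons_tuple y t)))%E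
  end.

Definition is_density {R : realType} (n : nat) (p : Rn R n -> R) : Prop :=
  measurable_fun [set: Rn R n] p /\ (forall y, 0 <= p y) /\
  lebint (fun y => (p y)%:E) = 1%E.

Definition pair_int {d} {T : measurableType d} {R : realType}
  (nu : probability T R) (f : T -> \bar R) : \bar R :=
  (\int[nu]_x f x)%E.

Definition supnorm {T : Type} {R : realType} (f : T -> R) : \bar R :=
  ereal_sup [set (`|f x|)%:E | x in [set: T]].

Definition norm4 {d} {T : measurableType d} {R : realType}
  (pif : nat -> probability T R) (phi : T -> R) (s : nat) : \bar R :=
  maxe 1%E (\big[maxe/-oo%E]_(r < s.+1)
               poweR (pair_int (pif r) (fun z => (`|phi z| ^+ 4)%:E)) (4^-1)).

From HB Require Import structures.
From mathcomp Require Import all_boot all_order all_algebra.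
From mathcomp Require Import all_classical all_reals all_analysis.
From mathcomp Require Import measurable_realfun.
From mathcomp Require Import ring lra.
Import Order.TTheory GRing.Theory Num.Theory.
Import numFieldNormedType.Exports.
Local Open Scope classical_set_scope.
Local Open Scope ring_scope.

(* Write W o and C o for the empirical means of beta_k and beta_k |phi|^4 over
   the accepted predicted particles, a and c for their integrals against
   pi_{k|k-1}, B = ||beta_k|| and S = ||beta_k |phi|^4||.  Pointwise, C/W <= S B/(gamma a) + c/a + |C - c|/a: if W >= a
   this is C/W <= C/a, and otherwise the acceptance test W >= gamma gives
   C/W <= S/gamma <= S B/(gamma a).  Taking expectations, c/a is the fourth
   moment of phi under pi_{k|k} by the update equation, hence at most
   ||phi||^4_{k,4}, and E|C - c| is controlled by the hypothesis on the
   predicted empirical measure; each of the three terms is then at most the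
   corresponding entry of the max times ||phi||^4_{k,4}. *)

Lemma ler_ratio_threshold (R : realFieldType) (g Bw C S a B c : R) :
  0 < g -> g <= Bw -> 0 <= C -> C <= S -> 0 < a -> a <= B ->
  C / Bw <= S * B / (g * a) + c / a + `|C - c| / a.
Proof.
move=> g0 gBw C0 CS a0 aB.
have Bw0 : 0 < Bw by apply: lt_le_trans gBw.
have C_le : C / a <= c / a + `|C - c| / a.
  by rewrite -mulrDl ler_pM2r ?invr_gt0 // -lerBlDl ler_norm.
rewrite -addrA; have [a_le_Bw|Bw_lt_a] := leP a Bw.
  apply: ler_wpDl; last by apply: le_trans C_le; rewrite ler_wpM2l // lef_pV2 ?posrE.
  by apply: divr_ge0; apply: mulr_ge0 => //; lra.
apply: ler_wpDr; first by apply: le_trans C_le; apply: divr_ge0 => //; lra.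
have -> : S * B / (g * a) = S / g * (B / a).
  by field; apply/andP; split; rewrite gt_eqF.
apply: le_trans (_ : S / g <= _).
  by apply: ler_pM; rewrite ?invr_ge0 ?lef_pV2 ?posrE; lra.
by rewrite ler_peMr ?divr_ge0 ?ler_pdivlMr ?mul1r //; lra.
Qed.

Lemma ler_add3_max_mul (R : realDomainType) (x1 x2 x3 m1 m2 m3 n : R) :
  0 <= n -> x1 <= m1 * n -> x2 <= m2 * n -> x3 <= m3 * n ->
  x1 + x2 + x3 <= 3 * Num.max (Num.max m1 m2) m3 * n.
Proof.
move=> n0 h1 h2 h3; set M := Num.max _ _.
have h1' : m1 * n <= M * n by rewrite ler_wpM2r // !le_max lexx.
have h2' : m2 * n <= M * n by rewrite ler_wpM2r // !le_max lexx !orbT.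
have h3' : m3 * n <= M * n by rewrite ler_wpM2r // le_max lexx orbT.
have -> : 3 * M * n = M * n + M * n + M * n by ring.
lra.
Qed.

Lemma powR_inv_expr {R : realType} (x : R) (n : nat) :
  0 <= x -> (0 < n)%N -> (x `^ n%:R^-1) ^+ n = x.
Proof.
move=> x0 n0.
by rewrite -powR_mulrn ?powR_ge0 // -powRrM mulVf ?powRr1 // pnatr_eq0 -lt0n.
Qed.

(* The point [x0] excludes the empty supremum [-oo]. *)
Lemma supnorm_finE {T : Type} {R : realType} (f : T -> R) (x0 : T) :
  (supnorm f < +oo)%E -> exists2 M : R, supnorm f = M%:E & forall x, `|f x| <= M.
Proof.
move=> fy; have ub x : ((`|f x|)%:E <= supnorm f)%E.
  by apply: ereal_sup_ubound; exists x.
have f0 : (0 <= supnorm f)%E by apply: le_trans (ub x0).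
have ffin : supnorm f \is a fin_num by rewrite ge0_fin_numE.
by exists (fine (supnorm f)) => [|x]; rewrite ?fineK // -lee_fin fineK.
Qed.

Lemma measurable_fun_div_lbounded {d} {T : measurableType d} {R : realType}
    (f h : T -> R) (e : R) :
  0 < e -> (forall x, e <= h x) ->
  measurable_fun setT f -> measurable_fun setT h ->
  measurable_fun setT (fun x => f x / h x).
Proof.
move=> e0 eh mf mh.
(* Clipping [h] below at [e] changes nothing and makes the inverse continuous. *)
have -> : (fun x => f x / h x) = (fun x => f x * (Num.max (h x) e)^-1).
  by apply/funext => x; rewrite (max_idPl (eh x)).
have inv_cont : continuous (fun y : R => (Num.max y e)^-1).
  move=> y; apply: (continuousV (s := fun y : R => Num.max y e) (x := y)).
    by rewrite gt_eqF // lt_max e0 orbT.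
  by apply: continuous_max; [exact: cvg_id|exact: cvg_cst].
apply: measurable_funM => //.
exact: measurableT_comp (continuous_measurable_fun inv_cont) mh.
Qed.

Section probability_integral.
Context {d : measure_display} {T : measurableType d} {R : realType}.
Variable mu : probability T R.

Lemma integral_cst_probability (c : \bar R) : (\int[mu]_x c = c)%E.
Proof. by rewrite integral_cst // [X in (_ * X)%E]probability_setT mule1. Qed.

Lemma integral_probability_bounded (f : T -> R) (M : R) :
  measurable_fun setT f -> (forall x, 0 <= f x) -> (forall x, f x <= M) ->
  exists2 r : R, (\int[mu]_x (f x)%:E = r%:E)%E & 0 <= r <= M.
Proof.
move=> mf f0 fM.
have mfE : measurable_fun setT (fun x => (f x)%:E) by exact/measurable_EFinP.
have I0 : (0 <= \int[mu]_x (f x)%:E)%E.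
  by apply: integral_ge0 => x _; rewrite lee_fin.
have IM : (\int[mu]_x (f x)%:E <= M%:E)%E.
  rewrite -[X in (_ <= X)%E]integral_cst_probability.
  by apply: ge0_le_integral => // x _; rewrite lee_fin.
have Ifin : (\int[mu]_x (f x)%:E)%E \is a fin_num.
  by rewrite ge0_fin_numE // (le_lt_trans IM) ?ltry.
exists (fine (\int[mu]_x (f x)%:E)%E); first by rewrite fineK.
by apply/andP; split; rewrite -lee_fin fineK.
Qed.

Lemma integral_probability_affine (A c : R) (f : T -> R) :
  0 <= A -> 0 <= c -> measurable_fun setT f -> (forall x, 0 <= f x) ->
  (\int[mu]_x (A + c * f x)%:E = A%:E + c%:E * \int[mu]_x (f x)%:E)%E.
Proof.
move=> A0 c0 mf f0; have mfE : measurable_fun setT (fun x => (f x)%:E).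
  exact/measurable_EFinP.
under eq_integral do rewrite EFinD EFinM.
rewrite ge0_integralD //.
- by rewrite integral_cst_probability ge0_integralZl_EFin // => x _; rewrite lee_fin.
- by move=> x _; rewrite -EFinM lee_fin mulr_ge0.
- exact: emeasurable_funM.
Qed.

End probability_integral.

Section norm4.
Context {d : measure_display} {T : measurableType d} {R : realType}.
Variables (pif : nat -> probability T R) (phi : T -> R).

Lemma norm4_ge1 s : (1 <= norm4 pif phi s)%E.
Proof. by rewrite /norm4 le_max lexx. Qed.

Lemma norm4_le_succ s : (norm4 pif phi s <= norm4 pif phi s.+1)%E.
Proof.
rewrite /norm4 [in X in (_ <= X)%E]big_ord_recr /= ge_max.
by rewrite !le_max !lexx !orbT.
Qed.

Lemma moment_le_norm4 s :
  (pair_int (pif s) (fun z => (`|phi z| ^+ 4)%:E) <= norm4 pif phi s ^+ 4)%E.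
Proof.
set x := pair_int _ _.
have x0 : (0 <= x)%E by apply: integral_ge0 => z _; rewrite lee_fin exprn_ge0.
have xn : (x `^ 4^-1 <= norm4 pif phi s)%E.
  by rewrite /norm4 big_ord_recr /= !le_max lexx !orbT.
case: (norm4 pif phi s) xn (norm4_ge1 s) => [n| |] xn n1 //.
- have xfin : x \is a fin_num.
    rewrite ge0_fin_numE //; apply: (@lty_poweRy _ _ 4^-1) => //.
    by rewrite (le_lt_trans xn) ?ltry.
  move: x0 xn; rewrite -(fineK xfin) poweR_EFin -EFin_expe !lee_fin => x0 xn.
  rewrite -[leLHS](@powR_inv_expr _ _ 4 x0 isT).
  apply: lerXn2r => //; rewrite nnegrE ?powR_ge0 //.
  exact: le_trans (powR_ge0 _ _) xn.
- by rewrite leey.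
Qed.

End norm4.

Lemma lee_moment_bound_combine {R : realType} (S B g a c Mp : R) (I m n : \bar R) :
  0 <= S -> 0 <= B -> 0 < g -> 0 < a -> (1 <= m)%E -> (m <= n)%E ->
  ((c / a)%:E <= n ^+ 4)%E -> (0 <= I)%E -> (I <= Mp%:E * B%:E * m ^+ 4)%E ->
  ((S * B / (g * a) + c / a)%:E + (a^-1)%:E * I <=
   3%:E * maxe (maxe (2%:E * S%:E * B%:E / (g%:E * a%:E)) (Mp%:E * B%:E / a%:E)) 1
     * n ^+ 4)%E.
Proof.
move=> S0 B0 g0 a0 m1 mn ca_le I0 Im.
rewrite -!EFinM !inver !gt_eqF ?mulr_gt0 // -!EFinM -!EFin_max.
set M := Num.max _ _.
have M1 : 1 <= M by rewrite le_max lexx orbT.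
case: n mn ca_le => [n| |] mn ca_le; last by move: (le_trans m1 mn).
- case: m m1 mn Im => [m| |] m1 mn Im //.
  have Ifin : I \is a fin_num.
    by rewrite ge0_fin_numE // (le_lt_trans Im) // -!EFin_expe -!EFinM ltry.
  move: I0 Im ca_le; rewrite -(fineK Ifin) -!EFin_expe -!EFinM -EFinD !lee_fin.
  set r := fine I => r0 rm ca_le; rewrite lee_fin in m1; rewrite lee_fin in mn.
  have m4 : 1 <= m ^+ 4 by rewrite exprn_ege1.
  have mn4 : m ^+ 4 <= n ^+ 4 by apply: lerXn2r; rewrite ?nnegrE //; lra.
  rewrite addrAC; apply: ler_add3_max_mul; first by apply: exprn_ge0; lra.
  + have u0 : 0 <= S * B / (g * a) by rewrite divr_ge0 ?mulr_ge0 //; lra.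
    have -> : 2 * S * B / (g * a) = 2 * (S * B / (g * a)) by ring.
    by move: u0; set u := S * B / (g * a); nra.
  + (* [Mp] is not assumed nonnegative, but [0 <= I <= Mp B m^4] forces [Mp B >= 0]. *)
    have MpB0 : 0 <= Mp * B by nra.
    have -> : Mp * B / a * n ^+ 4 = a^-1 * (Mp * B * n ^+ 4) by ring.
    rewrite ler_pM2l ?invr_gt0 //; apply: le_trans rm _.
    by rewrite ler_wpM2l.
  + by rewrite mul1r.
- rewrite (_ : +oo ^+ 4 = +oo)%E // [leRHS]muleC gt0_mulye ?leey //.
  by rewrite mule_gt0 // lte_fin; lra.
Qed.

Section threshold_ratio.
Context {R : realType} {dT dO : measure_display}.
Context {T : measurableType dT} {Omega : measurableType dO}.
Variables (P : probability Omega R) (N : nat) (part : 'I_N -> Omega -> T).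
Variables (w f : T -> R) (g S a B c : R).
Hypotheses (N_gt0 : (0 < N)%N) (mpart : forall i, measurable_fun setT (part i)).
Hypotheses (mw : measurable_fun setT w) (mf : measurable_fun setT f).
Hypotheses (w_ge0 : forall x, 0 <= w x) (f_ge0 : forall x, 0 <= f x).
Hypotheses (S_ge0 : 0 <= S) (wf_leS : forall x, w x * f x <= S) (c_ge0 : 0 <= c).
Hypotheses (g_gt0 : 0 < g) (a_gt0 : 0 < a) (a_leB : a <= B).
Hypothesis threshold : forall o, g <= N%:R^-1 * \sum_(i < N) w (part i o).

Let empirical_mean (h : T -> R) o := N%:R^-1 * \sum_(i < N) h (part i o).

Let measurable_empirical_mean h :
  measurable_fun setT h -> measurable_fun setT (empirical_mean h).
Proof.
move=> mh; apply: measurable_funM; first exact: measurable_cst.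
by apply: measurable_sum => i; exact: measurableT_comp mh (mpart i).
Qed.

Lemma expected_ratio_le :
  (\int[P]_o ((\sum_(i < N) w (part i o) * f (part i o))
               / \sum_(i < N) w (part i o))%:E
   <= (S * B / (g * a) + c / a)%:E
      + (a^-1)%:E * \int[P]_o `|(N%:R^-1 * \sum_(i < N) w (part i o) * f (part i o))%:E
                               - c%:E|)%E.
Proof.
have N0 : 0 < N%:R :> R by rewrite ltr0n.
have mwf : measurable_fun setT (fun x => w x * f x) by exact: measurable_funM.
pose C := empirical_mean (fun x => w x * f x).
have mC : measurable_fun setT C by exact: measurable_empirical_mean.
have C_ge0 o : 0 <= C o.
  apply: mulr_ge0; first by rewrite invr_ge0 ltW.
  by apply: sumr_ge0 => i _; rewrite mulr_ge0.
have C_leS o : C o <= S.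
  rewrite ler_pdivrMl // (_ : N%:R * S = \sum_(i < N) S).
    by apply: ler_sum => i _.
  by rewrite sumr_const card_ord mulr_natl.
have den_ge o : N%:R * g <= \sum_(i < N) w (part i o).
  by rewrite -ler_pdivlMl.
have ratioE o : (\sum_(i < N) w (part i o) * f (part i o)) / \sum_(i < N) w (part i o)
    = C o / empirical_mean w o.
  rewrite /C /empirical_mean; field.
  by rewrite !gt_eqF // (lt_le_trans _ (den_ge o)) ?mulr_gt0.
have mC_abs : measurable_fun setT (fun o => `|C o - c|).
  by apply: measurableT_comp => //; apply: measurable_funB.
under eq_integral do rewrite ratioE.
have absE : (\int[P]_o `|(C o)%:E - c%:E| = \int[P]_o (`|C o - c|)%:E)%E.
  by apply: eq_integral => o _; rewrite -EFinB abse_EFin.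
have A_ge0 : 0 <= S * B / (g * a) + c / a.
  have B_ge0 : 0 <= B := le_trans (ltW a_gt0) a_leB.
  by rewrite addr_ge0 ?divr_ge0 ?mulr_ge0 ?(ltW g_gt0) ?(ltW a_gt0).
have ainv_ge0 : 0 <= a^-1 by rewrite invr_ge0 ltW.
rewrite absE -integral_probability_affine //.
apply: ge0_le_integral => //.
- by move=> o _; rewrite lee_fin divr_ge0 // (le_trans (ltW g_gt0) (threshold o)).
- apply/measurable_EFinP.
  apply: (@measurable_fun_div_lbounded _ _ _ C (empirical_mean w) g) => //.
  exact: measurable_empirical_mean.
- by apply/measurable_EFinP; apply: measurable_funD => //; apply: measurable_funM.
- move=> o _; rewrite lee_fin [_ * `|_|]mulrC.
  exact: ler_ratio_threshold g_gt0 (threshold o) (C_ge0 o) (C_leS o) a_gt0 a_leB.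
Qed.

End threshold_ratio.

Theorem claim2
  (R : realType) (nx ny na : nat) (k : nat)
  (* defender's true states x_0..x_k and observations a_1..a_k *)
  (xs : nat -> Rn R nx) (as_ : nat -> Rn R na)
  (* rho (y | x) and beta (a | xhat) *)
  (rho : Rn R ny -> Rn R nx -> R) (beta : Rn R na -> Rn R nx -> R)
  (* attacker's forward-filter updates T_s *)
  (T : nat -> (Rn R nx * Rn R ny)%type -> Rn R nx)
  (* initial distribution of xhat_0 *)
  (pix0 : probability (Rn R nx) R)
  (* optimal inverse filter: pif s = pi_{s|s}, pip s = pi_{s|s-1} *)
  (pif pip : nat -> probability ((Rn R nx * Rn R ny)%type) R)
  (gamma_k : R) (phi : (Rn R nx * Rn R ny)%type -> R) (Mp : R)
  (* I-PF at time k: probability space of the particle randomness and the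
     N accepted predicted particles (tilde xhat^i_k, tilde y^i_k) *)
  (dO : measure_display) (Omega : measurableType dO) (P : probability Omega R)
  (N : nat) (part : 'I_N -> Omega -> (Rn R nx * Rn R ny)%type) :
  (1 <= k)%N ->
  (* rho and beta are (jointly measurable) conditional densities; T_s measurable *)
  measurable_fun [set: (Rn R ny * Rn R nx)%type] (fun p => rho p.1 p.2) ->
  measurable_fun [set: (Rn R na * Rn R nx)%type] (fun p => beta p.1 p.2) ->
  (forall x, is_density (fun y => rho y x)) ->
  (forall xh, is_density (fun a => beta a xh)) ->
  (forall s, measurable_fun [set: (Rn R nx * Rn R ny)%type] (T s)) ->
  (* pi_{0|0} = pi_0 = pix0 (x) rho(.|x_0) *)
  (forall psi : (Rn R nx * Rn R ny)%type -> R,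
      measurable_fun [set: (Rn R nx * Rn R ny)%type] psi -> (forall z, 0 <= psi z) ->
      pair_int (pif 0%N) (fun z => (psi z)%:E)
      = (\int[pix0]_xh lebint (fun y => (psi (xh, y) * rho y (xs 0%N))%:E))%E) ->
  (* prediction step: <pi_{s|s-1}, psi> = <pi_{s-1|s-1}, delta_T rho psi> *)
  (forall s, (1 <= s <= k)%N ->
    forall psi : (Rn R nx * Rn R ny)%type -> R,
      measurable_fun [set: (Rn R nx * Rn R ny)%type] psi -> (forall z, 0 <= psi z) ->
      pair_int (pip s) (fun z => (psi z)%:E)
      = pair_int (pif s.-1)
          (fun z => lebint (fun y => (psi (T s (z.1, y), y) * rho y (xs s))%:E))) ->
  (* update step: <pi_{s|s}, psi> = <pi_{s|s-1}, beta_s psi> / <pi_{s|s-1}, beta_s> *)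
  (forall s, (1 <= s <= k)%N ->
    forall psi : (Rn R nx * Rn R ny)%type -> R,
      measurable_fun [set: (Rn R nx * Rn R ny)%type] psi -> (forall z, 0 <= psi z) ->
      pair_int (pif s) (fun z => (psi z)%:E)
      = (pair_int (pip s) (fun z => (beta (as_ s) z.1 * psi z)%:E)
         / pair_int (pip s) (fun z => (beta (as_ s) z.1)%:E))%E) ->
  (* (A1) at time k *)
  (0 < pair_int (pip k) (fun z => (beta (as_ k) z.1)%:E))%E ->
  0 < gamma_k ->
  (gamma_k%:E < pair_int (pip k) (fun z => (beta (as_ k) z.1)%:E))%E ->
  (* (A2) at time k *)
  (supnorm (beta (as_ k)) < +oo)%E ->
  (supnorm (fun y => rho y (xs k)) < +oo)%E ->
  (* (A3) at time k, for a measurable test function phi *)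
  measurable_fun [set: (Rn R nx * Rn R ny)%type] phi ->
  (supnorm (fun z => (`|phi z| ^+ 4 * beta (as_ k) z.1)%R) < +oo)%E ->
  (* the I-PF particles: N >= 1, measurable, accepted by the threshold test *)
  (0 < N)%N ->
  (forall i, measurable_fun [set: Omega] (part i)) ->
  (forall w, gamma_k <= N%:R^-1 * \sum_(i < N) beta (as_ k) (part i w).1) ->
  (* hypothesis on the predicted empirical measure tilde pi^N_{k|k-1} *)
  (\int[P]_w
      `| (N%:R^-1 * \sum_(i < N)
             beta (as_ k) (part i w).1 * `|phi (part i w)| ^+ 4)%R%:E
         - pair_int (pip k) (fun z => (beta (as_ k) z.1 * `|phi z| ^+ 4)%:E) |
    <= Mp%:E * supnorm (beta (as_ k)) * (norm4 pif phi k.-1) ^+ 4)%E ->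
  (* conclusion: E <tilde pi^N_{k|k}, |phi|^4> <= tilde M_{k|k} ||phi||^4_{k,4} *)
  (\int[P]_w
      ((\sum_(i < N) beta (as_ k) (part i w).1 * `|phi (part i w)| ^+ 4)
       / (\sum_(j < N) beta (as_ k) (part j w).1))%R%:E
    <= 3%:E * maxe
          (maxe ((2%:E * supnorm (fun z => (beta (as_ k) z.1 * `|phi z| ^+ 4)%R)
                    * supnorm (beta (as_ k)))
                 / (gamma_k%:E * pair_int (pip k) (fun z => (beta (as_ k) z.1)%:E)))
                (Mp%:E * supnorm (beta (as_ k))
                 / pair_int (pip k) (fun z => (beta (as_ k) z.1)%:E)))
          1
       * (norm4 pif phi k) ^+ 4)%E.
Proof.
move=> k_ge1 _ mbeta _ dbeta _ _ _ update a_gt0 g_gt0 _ beta_fin _ mphi wphi_fin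
  N_gt0 mpart threshold pred_err.
set bk := beta (as_ k) in a_gt0 beta_fin wphi_fin threshold pred_err *.
pose z0 : Rn R nx * Rn R ny := (nseq_tuple nx 0, nseq_tuple ny 0).
have bk_ge0 xh : 0 <= bk xh := (dbeta xh).2.1 (as_ k).
have mw : measurable_fun setT (fun z : Rn R nx * Rn R ny => bk z.1).
  exact: measurableT_comp (measurable_fun_pair2 _ mbeta) measurable_fst.
have mf : measurable_fun setT (fun z => `|phi z| ^+ 4).
  exact/measurable_funX/measurableT_comp.
have f_ge0 z : 0 <= `|phi z| ^+ 4 by rewrite exprn_ge0.
have [B eB bk_leB] := supnorm_finE _ z0.1 beta_fin.
have [S eS wf_leS] := supnorm_finE _ z0 wphi_fin.
have {}wf_leS z : bk z.1 * `|phi z| ^+ 4 <= S by rewrite mulrC (le_trans (ler_norm _)).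
have S_ge0 : 0 <= S := le_trans (mulr_ge0 (bk_ge0 _) (f_ge0 z0)) (wf_leS z0).
have [a ea /andP[_ a_leB]] := integral_probability_bounded (pip k) _ _ mw
  (fun z => bk_ge0 z.1) (fun z => le_trans (ler_norm _) (bk_leB z.1)).
have [c ec /andP[c_ge0 _]] := integral_probability_bounded (pip k) _ _
  (measurable_funM mw mf) (fun z => mulr_ge0 (bk_ge0 z.1) (f_ge0 z)) wf_leS.
rewrite /pair_int ea lte_fin in a_gt0; rewrite /pair_int ec eB in pred_err.
have moment : pair_int (pif k) (fun z => (`|phi z| ^+ 4)%:E) = (c / a)%:E.
  rewrite (update k _ _ mf) ?k_ge1 ?leqnn //.
  by rewrite /pair_int ea ec inver gt_eqF.
apply: le_trans (expected_ratio_le P _ _ _ _ _ _ _ _ _ N_gt0 mpart mw mf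
  (fun z => bk_ge0 z.1) f_ge0 S_ge0 wf_leS c_ge0 g_gt0 a_gt0 a_leB threshold) _.
rewrite (_ : supnorm _ = S%:E); last first.
  by rewrite -eS; congr supnorm; apply/funext => z; rewrite mulrC.
rewrite eB /pair_int ea.
apply: (lee_moment_bound_combine _ _ _ _ _ _ _ (norm4 pif phi k.-1)) => //.
- exact: le_trans (ltW a_gt0) a_leB.
- exact: norm4_ge1.
- by have := norm4_le_succ pif phi k.-1; rewrite prednK.
- by rewrite -moment moment_le_norm4.
- by apply: integral_ge0 => o _; rewrite abse_ge0.
Qed.
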